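(* Fix $\tau\in\mathbb N$ and assume $p_{A,\hat Y}(a,y)>0$ for all $(a,y)\in\mathcal A\times\mathcal Y$. Let $q^*$ be the partition returned by the greedy procedure on $n$ i.i.d. samples of $(A,\hat Y)$. Then $\hat u^{(q^* )}_{\mathrm{ind}}$ is a consistent estimator of $u^*$: for every $\epsilon>0$, $\Pr\big(|\hat u^{(q^* )}_{\mathrm{ind}}-u^*|>\epsilon\big)\to0$ as $n\to\infty$.
   Context: Let $\hat Y$ take values in a finite set $\mathcal Y$ and $A=(A_1,\dots,A_d)$, $A_k$ taking values in a finite set $\mathcal A_k$, $\mathcal A=\prod_k\mathcal A_k$. Write $p_{\hat Y\mid A}(y\mid a)=\Pr(\hat Y=y\mid A=a)$ and $u^*=\sup_{y\in\mathcal Y}\sup_{(a,a')\in\mathcal A^2}\big|\log\big(p_{\hat Y\mid A}(y\mid a)/p_{\hat Y\mid A}(y\mid a')\big)\big|$. For $t\subseteq[d]=\{1,\dots,d\}$ let $A_t=(A_k)_{k\in t}$ with values in $\mathcal A_t=\prod_{k\in t}\mathcal A_k$. Given i.i.d. samples $(A^{(i)},\hat Y^{(i)})_{i=1}^n$, let $N_{a_t,y}=\#\{i:A^{(i)}_t=a_t,\hat Y^{(i)}=y\}$, $N_{a_t}=\sum_y N_{a_t,y}$, and $\hat p(y\mid a_t)=N_{a_t,y}/N_{a_t}$. A partition $q$ of $[d]$ is feasible if $N_{a_t,y}>\tau$ for all $t\in q$, $a_t\in\mathcal A_t$, $y\in\mathcal Y$. For a feasible partition $q$, $\hat u^{(q)}_{\mathrm{ind}}=\sup_{y\in\mathcal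 Y}\sum_{t\in q}\sup_{(a_t,a_t')\in\mathcal A_t^2}\big|\log\big(\hat p(y\mid a_t)/\hat p(y\mid a_t')\big)\big|$. Greedy procedure: if the partition into singletons is not feasible, $q^*$ is the singleton partition and $\hat u^{(q^* )}_{\mathrm{ind}}$ is set to an arbitrary value; otherwise start with $q$ equal to the singleton partition and, as long as some partition obtained from $q$ by merging two distinct blocks $t_1,t_2\in q$ into $t_1\cup t_2$ is feasible, replace $q$ by such a feasible merged partition minimizing $\hat s^*$ (ties broken arbitrarily); when no feasible merge exists, output $q^*=q$. Here $\hat s^*(q)=(\hat\sigma_q^{2/3}+\hat\sigma_{y,q}^{2/3})^{3/2}$ where $\hat\sigma_q$ and $\hat\sigma_{y,q}$ are the standard deviations, under the empirical joint distribution $\hat p$ of $(A,\hat Y)$, of $\log\big(\hat p_A(A)/\prod_{t\in q}\hat p_{A_t}(A_t)\big)$ and $\log\big(\hat p_{A\mid\hat Y}(A\mid\hat Y)/\prod_{t\in q}\hat p_{A_t\mid\hat Y}(A_t\mid\hat Y)\big)$. *)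

From HB Require Import structures.
From mathcomp Require Import all_boot all_order all_algebra.
From mathcomp Require Import all_classical all_reals all_analysis.
Set Implicit Arguments. Unset Strict Implicit. Unset Printing Implicit Defensive.
Import Order.TTheory GRing.Theory Num.Theory.
Local Open Scope ring_scope.

Section Fairness.
Variable R : realType.
Variable d : nat.
Variable Ak : 'I_d -> finType.
Variable Y : finType.

Definition Aty := {dffun forall k : 'I_d, Ak k}.
Definition Asub (t : {set 'I_d}) :=
  {dffun forall k : {k : 'I_d | k \in t}, Ak (sval k)}.
Definition restr (t : {set 'I_d}) (a : Aty) : Asub t :=
  @finfun _ (fun k : {k : 'I_d | k \in t} => Ak (sval k)) (fun k => a (sval k)).

Definition Sample := (Aty * Y)%type.

Definition pcond (p : Aty -> Y -> R) (a : Aty) (y : Y) : R :=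
  p a y / \sum_(y' : Y) p a y'.

(* u^* ; sups over finite nonempty index sets of nonnegative reals *)
Definition ustar (p : Aty -> Y -> R) : R :=
  \big[Num.max/0]_(y : Y) \big[Num.max/0]_(a : Aty) \big[Num.max/0]_(a' : Aty)
    `|ln (pcond p a y / pcond p a' y)|.

Definition Pr_iid (p : Aty -> Y -> R) (n : nat) (E : n.-tuple Sample -> bool) : R :=
  \sum_(s : n.-tuple Sample | E s) \prod_(i < n) p (tnth s i).1 (tnth s i).2.

Section Empirical.
Variables (n : nat) (s : n.-tuple Sample).

Definition cnt_ty (t : {set 'I_d}) (b : Asub t) (y : Y) : nat :=
  #|[set i : 'I_n | (restr t (tnth s i).1 == b) && ((tnth s i).2 == y)]|.
Definition cnt_t (t : {set 'I_d}) (b : Asub t) : nat :=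
  #|[set i : 'I_n | restr t (tnth s i).1 == b]|.
Definition phat (t : {set 'I_d}) (b : Asub t) (y : Y) : R :=
  (cnt_ty b y)%:R / (cnt_t b)%:R.

Definition feasible (tau : nat) (q : {set {set 'I_d}}) : Prop :=
  forall t, t \in q -> forall (b : Asub t) (y : Y), (tau < cnt_ty b y)%N.

Definition uind (q : {set {set 'I_d}}) : R :=
  \big[Num.max/0]_(y : Y) \sum_(t in q)
     \big[Num.max/0]_(b : Asub t) \big[Num.max/0]_(b' : Asub t)
        `|ln (phat b y / phat b' y)|.

Definition cnt_ay (a : Aty) (y : Y) : nat := #|[set i : 'I_n | tnth s i == (a, y)]|.
Definition cnt_a (a : Aty) : nat := #|[set i : 'I_n | (tnth s i).1 == a]|.
Definition cnt_y (y : Y) : nat := #|[set i : 'I_n | (tnth s i).2 == y]|.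
Definition pemp (a : Aty) (y : Y) : R := (cnt_ay a y)%:R / n%:R.

Definition f_ind (q : {set {set 'I_d}}) (a : Aty) (y : Y) : R :=
  ln (((cnt_a a)%:R / n%:R) / \prod_(t in q) ((cnt_t (restr t a))%:R / n%:R)).
Definition f_cind (q : {set {set 'I_d}}) (a : Aty) (y : Y) : R :=
  ln (((cnt_ay a y)%:R / (cnt_y y)%:R) /
      \prod_(t in q) ((cnt_ty (restr t a) y)%:R / (cnt_y y)%:R)).

Definition emp_mean (f : Aty -> Y -> R) : R :=
  \sum_(a : Aty) \sum_(y : Y) pemp a y * f a y.
Definition emp_sd (f : Aty -> Y -> R) : R :=
  Num.sqrt (\sum_(a : Aty) \sum_(y : Y) pemp a y * (f a y - emp_mean f) ^+ 2).

Definition shat (q : {set {set 'I_d}}) : R :=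
  (emp_sd (f_ind q) `^ (2 / 3) + emp_sd (f_cind q) `^ (2 / 3)) `^ (3 / 2).

Definition merge (q : {set {set 'I_d}}) (t1 t2 : {set 'I_d}) : {set {set 'I_d}} :=
  (t1 :|: t2) |: ((q :\ t1) :\ t2).

Definition feasible_merge (tau : nat) (q q' : {set {set 'I_d}}) : Prop :=
  exists t1 t2, [/\ t1 \in q, t2 \in q, t1 != t2, q' = merge q t1 t2 & feasible tau q'].

Definition greedy_step (tau : nat) (q q' : {set {set 'I_d}}) : Prop :=
  feasible_merge tau q q' /\
  forall q'', feasible_merge tau q q'' -> shat q' <= shat q''.

(* greedy_run tau q r : starting from q, some run of the greedy procedure
   (with some tie-breaking) stops at r *)
Inductive greedy_run (tau : nat) : {set {set 'I_d}} -> {set {set 'I_d}} -> Prop :=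
| gr_stop q : (forall q', ~ feasible_merge tau q q') -> greedy_run tau q q
| gr_step q q' r : greedy_step tau q q' -> greedy_run tau q' r -> greedy_run tau q r.

End Empirical.

Definition singleton_part : {set {set 'I_d}} := [set [set k] | k : 'I_d].

End Fairness.

(* Since every cell (a, y) has positive probability, for large n all the counts
   N_{a,y} are, with high probability, within a factor k of their means n p(a, y).
   Then N_{a,y} > tau, every partition is feasible, and the greedy procedure can
   only stop at the one-block partition {[d]}, where \hat u_ind is the plug-in
   estimate of u^* computed from the empirical conditional law; a factor k on
   all the counts moves it by at most 4 ln k.  Chebyshev's inequality for each
   count, with a union bound over the cells, bounds the probability that some
   count is not within that factor by O(1/n). *)

From Pilot Require Import Defs.
From mathcomp Require Import all_boot all_order all_algebra.
From mathcomp Require Import all_classical all_reals all_analysis.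
From mathcomp Require Import ring lra.
Set Implicit Arguments. Unset Strict Implicit. Unset Printing Implicit Defensive.
Import Order.TTheory GRing.Theory Num.Theory numFieldNormedType.Exports.
Local Open Scope ring_scope.

Section MaxDistance.
Variable R : realDomainType.

Lemma max_dist_le (x1 x2 y1 y2 e : R) :
  `|x1 - y1| <= e -> `|x2 - y2| <= e -> `|Num.max x1 x2 - Num.max y1 y2| <= e.
Proof.
rewrite !ler_norml => /andP[? ?] /andP[? ?].
by rewrite !maxEle; case: ifP => ?; case: ifP => ?; apply/andP; split; lra.
Qed.

Lemma bigmax0_dist_le (I : finType) (F G : I -> R) (e : R) : 0 <= e ->
  (forall i, `|F i - G i| <= e) ->
  `|\big[Num.max/0]_i F i - \big[Num.max/0]_i G i| <= e.
Proof.
move=> e_ge0 FG; elim/big_ind2: _ => [|x1 x2 y1 y2|i _]; last exact: FG.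
- by rewrite subrr normr0.
- exact: max_dist_le.
Qed.

End MaxDistance.

Section FactorBounds.
Variable R : realFieldType.

Lemma sumr_gt0 (I : finType) (i0 : I) (F : I -> R) :
  (forall i, 0 < F i) -> 0 < \sum_i F i.
Proof. by move=> F_gt0; rewrite (bigD1 i0) //= ltr_pwDl // sumr_ge0 // => i _; exact: ltW. Qed.

Lemma sum_within_factor (I : finType) (u v : I -> R) (k : R) :
  (forall i, v i / k <= u i <= k * v i) ->
  (\sum_i v i) / k <= \sum_i u i <= k * \sum_i v i.
Proof.
move=> uv; rewrite mulr_suml mulr_sumr; apply/andP; split.
  by apply: ler_sum => i _; case/andP: (uv i).
by apply: ler_sum => i _; case/andP: (uv i).
Qed.

Lemma factor_bounds_of_dev (v z k : R) : 1 <= k -> 0 <= v ->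
  `|z| <= v * (1 - k^-1) -> v / k <= v + z <= k * v.
Proof.
move=> k_ge1 v_ge0; rewrite ler_norml => /andP[zl zu].
have kV : k * k^-1 = 1 by rewrite divff // gt_eqF //; lra.
have kV_ge0 : 0 <= k^-1 by rewrite invr_ge0; lra.
apply/andP; split; first by rewrite mulrC; lra.
(* 2 - 1/k <= k because (k - 1)^2 >= 0 *)
nra.
Qed.

End FactorBounds.

Section LikelihoodRatios.
Variables (R : realType) (d : nat) (Ak : 'I_d -> finType) (Y : finType).
Implicit Types (p c : Aty Ak -> Y -> R) (a : Aty Ak) (y : Y).

Lemma abs_ln_div_le (u v k : R) : 0 < v -> 1 <= k ->
  v / k <= u <= k * v -> `|ln (u / v)| <= ln k.
Proof.
move=> v_gt0 k_ge1 /andP[vu uv].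
have k_gt0 : 0 < k by lra.
have u_gt0 : 0 < u by apply: lt_le_trans vu; rewrite divr_gt0.
rewrite ler_norml -lnV ?posrE ?invr_gt0 // !ler_ln ?posrE ?invr_gt0 ?divr_gt0 //.
by rewrite ler_pdivlMr // ler_pdivrMr // mulrC vu.
Qed.

Lemma pcond_gt0 p a y : (forall y', 0 < p a y') -> 0 < pcond p a y.
Proof.
by move=> p_gt0; rewrite /pcond divr_gt0 // (sumr_gt0 y).
Qed.

Lemma pcond_scale p (m : R) a y :
  m != 0 -> pcond (fun a y => m * p a y) a y = pcond p a y.
Proof. by move=> m_neq0; rewrite /pcond -mulr_sumr invfM mulrACA mulfV ?mul1r. Qed.

Lemma ustar_scale p (m : R) : m != 0 -> ustar (fun a y => m * p a y) = ustar p.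
Proof.
move=> m_neq0; apply: eq_bigr => y _; apply: eq_bigr => a _; apply: eq_bigr => a' _.
by rewrite !pcond_scale.
Qed.

Lemma ustar_eq0 p : (forall a a' : Aty Ak, a = a') -> ustar p = 0.
Proof.
move=> Aty_trivial; apply: bigmax_eq_id => y _.
apply: bigmax_le => // a _; apply: bigmax_le => // a' _.
(* x / x is 1, or 0 when x = 0; both have logarithm 0 *)
rewrite (Aty_trivial a' a); have [->|pc_neq0] := eqVneq (pcond p a y) 0.
  by rewrite mul0r ln0 ?normr0.
by rewrite divff // ln1 normr0.
Qed.

Section Close.
Variables (p c : Aty Ak -> Y -> R) (k : R).
Hypotheses (k_ge1 : 1 <= k) (p_gt0 : forall a y, 0 < p a y).
Hypothesis c_close : forall a y, p a y / k <= c a y <= k * p a y.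

Let c_gt0 a y : 0 < c a y.
Proof.
case/andP: (c_close a y) => + _; apply: lt_le_trans.
by rewrite divr_gt0 ?p_gt0 // (lt_le_trans ltr01 k_ge1).
Qed.

Lemma abs_ln_pcond_div_le a y : `|ln (pcond c a y / pcond p a y)| <= 2 * ln k.
Proof.
have -> : pcond c a y / pcond p a y =
          (c a y / p a y) / ((\sum_y' c a y') / \sum_y' p a y').
  by rewrite /pcond; field; rewrite !gt_eqF ?(sumr_gt0 y).
rewrite lnM ?lnV ?posrE ?invr_gt0 ?divr_gt0 ?(sumr_gt0 y) //.
apply: le_trans (ler_normB _ _) _; rewrite -[2]/(1 + 1) mulrDl mul1r.
apply: lerD; apply: abs_ln_div_le => //; first exact: sumr_gt0.
by apply: sum_within_factor => y'; exact: c_close.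
Qed.

Lemma ustar_close : `|ustar c - ustar p| <= 4 * ln k.
Proof.
have lnk_ge0 : 0 <= 4 * ln k by rewrite mulr_ge0 ?ln_ge0.
apply: bigmax0_dist_le => // y; apply: bigmax0_dist_le => // a.
apply: bigmax0_dist_le => // a'; apply: le_trans (ler_dist_dist _ _) _.
have pp_gt0 b : 0 < pcond p b y by apply: pcond_gt0.
have pc_gt0 b : 0 < pcond c b y by apply: pcond_gt0.
pose rho b := pcond c b y / pcond p b y.
have rho_gt0 b : 0 < rho b by rewrite divr_gt0.
have -> : pcond c a y / pcond c a' y = rho a / rho a' * (pcond p a y / pcond p a' y).
  by rewrite /rho; field; rewrite !gt_eqF.
have rr_gt0 : 0 < rho a / rho a' by rewrite divr_gt0.
have pr_gt0 : 0 < pcond p a y / pcond p a' y by rewrite divr_gt0.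
rewrite lnM ?posrE // addrK lnM ?lnV ?posrE ?invr_gt0 //.
apply: le_trans (ler_normB _ _) _.
have -> : 4 * ln k = 2 * ln k + 2 * ln k by ring.
by apply: lerD; apply: abs_ln_pcond_div_le.
Qed.

End Close.

End LikelihoodRatios.

Section EmpiricalCounts.
Variables (R : realType) (d : nat) (Ak : 'I_d -> finType) (Y : finType).
Variables (n : nat) (s : n.-tuple (Sample Ak Y)).

Definition extend {t : {set 'I_d}} (b : Asub Ak t) (a0 : Aty Ak) : Aty Ak :=
  [ffun k => if @idP (k \in t) is ReflectT kt then b (exist _ k kt) else a0 k].

Lemma restr_extend t (b : Asub Ak t) a0 : restr t (extend b a0) = b.
Proof.
apply/ffunP => -[k kt]; rewrite !ffunE /=.
destruct idP as [kt'|not_kt]; last by rewrite kt in not_kt.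
by rewrite (bool_irrelevance kt' kt).
Qed.

Definition unrestrT (b : Asub Ak [set: 'I_d]) : Aty Ak :=
  [ffun k => b (exist _ k (finset.in_setT k))].

Lemma restrT_bij : bijective (restr [set: 'I_d] : Aty Ak -> _).
Proof.
exists unrestrT => [a|b]; apply/ffunP => k; rewrite !ffunE //.
by case: k => k kT /=; rewrite (bool_irrelevance kT (finset.in_setT k)).
Qed.

Lemma cnt_ay_le_cnt_ty t a y : (cnt_ay s a y <= cnt_ty s (restr t a) y)%N.
Proof.
apply: subset_leq_card; apply/fintype.subsetP => i; rewrite !inE => /eqP ->.
by rewrite !eqxx.
Qed.

Lemma feasible_of_cnt_ay_gt (a0 : Aty Ak) tau :
  (forall a y, tau < cnt_ay s a y)%N -> forall q, feasible s tau q.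
Proof.
move=> cnt_gt q t _ b y; rewrite -(restr_extend b a0).
exact: leq_trans (cnt_gt _ y) (cnt_ay_le_cnt_ty _ _ _).
Qed.

Lemma cnt_t_sum t (b : Asub Ak t) : cnt_t s b = (\sum_y cnt_ty s b y)%N.
Proof.
rewrite /cnt_t -sum1dep_card (partition_big (fun i => (tnth s i).2) predT) //=.
by apply: eq_bigr => y _; rewrite /cnt_ty -sum1dep_card.
Qed.

Lemma cnt_ty_restrT a y : cnt_ty s (restr [set: 'I_d] a) y = cnt_ay s a y.
Proof.
apply: eq_card => i; rewrite !inE (bij_eq restrT_bij).
by case: (tnth s i) => a' y'; rewrite xpair_eqE.
Qed.

Lemma phat_restrT a y :
  phat R s (restr [set: 'I_d] a) y = pcond (fun a' y' => (cnt_ay s a' y')%:R) a y.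
Proof.
rewrite /phat /pcond cnt_ty_restrT cnt_t_sum natr_sum.
by under eq_bigr do rewrite cnt_ty_restrT.
Qed.

Lemma uind_setT :
  uind R s [set [set: 'I_d]] = ustar (fun a y => (cnt_ay s a y)%:R : R).
Proof.
apply: eq_bigr => y _; rewrite big_set1.
rewrite (reindex _ (onW_bij _ restrT_bij)); apply: eq_bigr => a _.
rewrite (reindex _ (onW_bij _ restrT_bij)); apply: eq_bigr => a' _.
by rewrite !phat_restrT.
Qed.

End EmpiricalCounts.

Section Greedy.
Variables (R : realType) (d : nat) (Ak : 'I_d -> finType) (Y : finType).
Variables (n : nat) (s : n.-tuple (Sample Ak Y)) (tau : nat).

Lemma merge_covers (q : {set {set 'I_d}}) t1 t2 k :
  t1 \in q -> t2 \in q -> (exists2 t, t \in q & k \in t) ->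
  exists2 t, t \in Defs.merge q t1 t2 & k \in t.
Proof.
move=> t1q t2q [t tq kt]; exists (if (t == t1) || (t == t2) then t1 :|: t2 else t).
  by case: ifP => [_|/norP[? ?]]; rewrite !inE ?eqxx //; apply/orP; right; apply/and3P.
by case: ifP => // /orP[] /eqP <-; rewrite inE kt ?orbT.
Qed.

Hypothesis all_feasible : forall q, feasible s tau q.

Lemma greedy_run_one_block q0 r : greedy_run R s tau q0 r ->
  (forall k, exists2 t, t \in q0 & k \in t) ->
  (forall k, exists2 t, t \in r & k \in t) /\ {in r &, forall t1 t2, t1 = t2}.
Proof.
elim=> [q stop | q q' r' [[t1 [t2 [t1q t2q _ -> _]]] _] _ IH] q_covers.
  split=> // t1 t2 t1q t2q; apply/eqP/negPn/negP => t12.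
  by apply: (stop (Defs.merge q t1 t2)); exists t1, t2.
by apply: IH => k; apply: merge_covers.
Qed.

Lemma uind_greedy_run r : greedy_run R s tau (singleton_part d) r ->
  uind R s r = ustar (fun a y => (cnt_ay s a y)%:R).
Proof.
move=> run; have [] := greedy_run_one_block run.
  by move=> k; exists [set k]; [apply/imsetP; exists k | rewrite set11].
move=> r_covers r_one; have [r0|[t tr]] := set_0Vmem r.
  have Aty_trivial (a a' : Aty Ak) : a = a'.
    by apply/ffunP => k; have [t] := r_covers k; rewrite r0 inE.
  rewrite ustar_eq0 //; apply: bigmax_eq_id => y _.
  by rewrite r0 big_set0.
suff -> : r = [set [set: 'I_d]] by rewrite uind_setT.
have tT : t = [set: 'I_d].
  by apply/setP => k; have [t' t'r kt'] := r_covers k; rewrite inE (r_one _ _ tr t'r).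
apply/setP => t'; rewrite inE -tT; apply/idP/eqP => [t'r|->//].
exact: r_one.
Qed.

End Greedy.

Section IidSums.
Variables (R : realType) (T : finType) (n : nat).

Lemma sum_tuple_prod (F : 'I_n -> T -> R) :
  \sum_(s : n.-tuple T) \prod_(i < n) F i (tnth s i) = \prod_(i < n) \sum_x F i x.
Proof.
rewrite bigA_distr_bigA /= (reindex (fun f : {ffun 'I_n -> T} => [tuple f i | i < n])).
  by apply: eq_bigr => f _; apply: eq_bigr => i _; rewrite tnth_mktuple.
exists (fun s : n.-tuple T => [ffun i => tnth s i]) => [f _|s _].
  by apply/ffunP => i; rewrite ffunE tnth_mktuple.
by apply: eq_from_tnth => i; rewrite tnth_mktuple ffunE.
Qed.

Variable P : T -> R.
Hypotheses (P_ge0 : forall x, 0 <= P x) (P_sum1 : \sum_x P x = 1).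

Definition iid_weight (s : n.-tuple T) : R := \prod_(i < n) P (tnth s i).

Definition count_dev (s : n.-tuple T) (x : T) : R :=
  \sum_(i < n) ((tnth s i == x)%:R - P x).

Lemma card_eq_count_dev s x :
  #|[set i : 'I_n | tnth s i == x]|%:R = n%:R * P x + count_dev s x.
Proof.
rewrite /count_dev sumrB sumr_const card_ord mulr_natl addrC subrK.
rewrite -sum1dep_card big_mkcond /= natr_sum; apply: eq_bigr => i _.
by case: (_ == _).
Qed.

Lemma iid_sum_sq (D : T -> R) : \sum_x P x * D x = 0 ->
  \sum_s iid_weight s * (\sum_(i < n) D (tnth s i)) ^+ 2 =
  n%:R * \sum_x P x * D x ^+ 2.
Proof.
move=> mean0.
pose G (i j k : 'I_n) x := P x * ((if k == i then D x else 1) * (if k == j then D x else 1)).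
have expand s : iid_weight s * (\sum_(i < n) D (tnth s i)) ^+ 2 =
                \sum_(i < n) \sum_(j < n) \prod_(k < n) G i j k (tnth s k).
  rewrite expr2 mulr_suml mulr_sumr; apply: eq_bigr => i _.
  rewrite mulr_sumr mulr_sumr; apply: eq_bigr => j _.
  by rewrite /G !big_split /= -!big_mkcond !big_pred1_eq /iid_weight; ring.
under eq_bigr do rewrite expand.
rewrite exchange_big /= -[n in n%:R]card_ord -sumr_const mulr_suml; apply: eq_bigr => i _.
rewrite mul1r exchange_big (bigD1 i) //= [X in _ + X]big1 ?addr0 => [|j ji].
  rewrite sum_tuple_prod (bigD1 i) //= [X in _ * X]big1 ?mulr1 => [|k ki].
    by apply: eq_bigr => x _; rewrite /G eqxx expr2.
  by rewrite /G (negbTE ki); under eq_bigr do rewrite !mulr1.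
rewrite sum_tuple_prod (bigD1 i) //= [X in X * _](_ : _ = 0) ?mul0r //.
by rewrite /G eqxx eq_sym (negbTE ji); under eq_bigr do rewrite mulr1.
Qed.

Lemma iid_count_dev_sq x0 : \sum_s iid_weight s * count_dev s x0 ^+ 2 <= n%:R.
Proof.
pose D x : R := (x == x0)%:R - P x0.
have P_x0_le1 : P x0 <= 1 by rewrite -P_sum1 (bigD1 x0) //= lerDl sumr_ge0.
have mean0 : \sum_x P x * D x = 0.
  under eq_bigr do rewrite mulrBr; rewrite sumrB -mulr_suml P_sum1 mul1r.
  rewrite (bigD1 x0) //= eqxx mulr1 big1 ?addr0 ?subrr // => x /negbTE ->.
  by rewrite mulr0.
rewrite (iid_sum_sq mean0) -[X in _ <= X]mulr1 ler_wpM2l // -P_sum1.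
apply: ler_sum => x _; rewrite -[X in _ <= X]mulr1 ler_wpM2l // /D.
by have := P_ge0 x0; case: (x == x0) => /=; nra.
Qed.

Lemma iid_union_bound (E : pred (n.-tuple T)) (eps : T -> R) :
  (forall x, 0 < eps x) -> (forall s, E s -> exists x, eps x < `|count_dev s x|) ->
  \sum_(s | E s) iid_weight s <= \sum_x n%:R / eps x ^+ 2.
Proof.
move=> eps_gt0 E_dev.
have w_ge0 s : 0 <= iid_weight s by apply: prodr_ge0.
pose B s := \sum_x count_dev s x ^+ 2 / eps x ^+ 2.
have B_ge0 s : 0 <= B s by apply: sumr_ge0 => x _; rewrite divr_ge0 ?sqr_ge0.
have B_ge1 s : E s -> 1 <= B s.
  case/E_dev => x dev_gt; rewrite /B (bigD1 x) //= -[1]addr0 lerD ?sumr_ge0 //.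
    rewrite ler_pdivlMr ?exprn_gt0 // mul1r -[count_dev s x ^+ 2]real_normK ?num_real //.
    by have := eps_gt0 x; nra.
  by move=> y _; rewrite divr_ge0 ?sqr_ge0.
apply: (@le_trans _ _ (\sum_s iid_weight s * B s)).
  rewrite [X in _ <= X](bigID E) /= -[X in X <= _]addr0 lerD ?sumr_ge0 //.
    by apply: ler_sum => s Es; rewrite -[X in X <= _]mulr1 ler_wpM2l ?B_ge1.
  by move=> s _; apply: mulr_ge0.
rewrite /B; under eq_bigr do rewrite mulr_sumr; rewrite exchange_big /=.
apply: ler_sum => x _; under eq_bigr do rewrite mulrA.
by rewrite -mulr_suml ler_wpM2r ?invr_ge0 ?sqr_ge0 ?iid_count_dev_sq.
Qed.

End IidSums.

Section Consistency.
Variables (R : realType) (d : nat) (Ak : 'I_d -> finType) (Y : finType).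
Variables (p : Aty Ak -> Y -> R) (tau : nat) (k : R).
Variable est : forall n : nat, n.-tuple (Sample Ak Y) -> R.
Arguments est : clear implicits.
Hypotheses (k_gt1 : 1 < k) (p_gt0 : forall a y, 0 < p a y).
Hypothesis p_sum1 : \sum_(a : Aty Ak) \sum_(y : Y) p a y = 1.
Hypothesis est_greedy : forall (n : nat) (s : n.-tuple (Sample Ak Y)),
  feasible s tau (singleton_part d) ->
  exists q, greedy_run R s tau (singleton_part d) q /\ est n s = uind R s q.

Let P (x : Sample Ak Y) := p x.1 x.2.
Let tol (x : Sample Ak Y) := P x * (1 - k^-1).
Let k_ge1 : 1 <= k := ltW k_gt1.
Let tol_gt0 x : 0 < tol x.
Proof. by rewrite mulr_gt0 ?p_gt0 // subr_gt0 invf_lt1 // (lt_trans ltr01 k_gt1). Qed.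

Lemma cnt_ay_within_factor n (s : n.-tuple (Sample Ak Y)) :
  (forall x, `|count_dev P s x| <= n%:R * tol x) ->
  forall a y, n%:R * p a y / k <= (cnt_ay s a y)%:R <= k * (n%:R * p a y).
Proof.
move=> dev_small a y.
have -> : (cnt_ay s a y)%:R = _ := card_eq_count_dev P s (a, y).
apply: factor_bounds_of_dev => //; first by apply: mulr_ge0 => //; exact: ltW.
by rewrite -mulrA dev_small.
Qed.

Lemma uind_greedy_run_close n (s : n.-tuple (Sample Ak Y)) r : (0 < n)%N ->
  (forall a y, n%:R * p a y / k <= (cnt_ay s a y)%:R <= k * (n%:R * p a y)) ->
  (forall q, feasible s tau q) -> greedy_run R s tau (singleton_part d) r ->
  `|uind R s r - ustar p| <= 4 * ln k.
Proof.
move=> n_gt0 cnt_close feas run; rewrite (uind_greedy_run feas run).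
rewrite -(ustar_scale p (m := n%:R)) ?pnatr_eq0 -?lt0n //.
by apply: ustar_close => // a y; rewrite mulr_gt0 ?ltr0n.
Qed.

Lemma Pr_iid_estimate_far_le n e : (0 < n)%N -> 4 * ln k <= e ->
  (forall x, tau%:R * k / P x < n%:R) ->
  Pr_iid p (fun s : n.-tuple (Sample Ak Y) => e < `|est n s - ustar p|) <=
  \sum_x n%:R / (n%:R * tol x) ^+ 2.
Proof.
move=> n_gt0 lnk_le n_large.
have /card_gt0P[a0 _] : (0 < #|Aty Ak|)%N.
  rewrite lt0n; apply: contra_eqN p_sum1 => /eqP/card0_eq Aty0.
  by rewrite big_pred0 // eq_sym oner_eq0.
have P_sum1 : \sum_x P x = 1 by rewrite -p_sum1 pair_bigA.
apply: (iid_union_bound (fun x => ltW (p_gt0 x.1 x.2)) P_sum1) => [x|s s_far].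
  by rewrite mulr_gt0 ?ltr0n ?tol_gt0.
apply/existsP; apply: contraLR s_far => /existsPn dev_small; rewrite -leNgt.
have dev_le x : `|count_dev P s x| <= n%:R * tol x by rewrite leNgt dev_small.
have cnt_close := cnt_ay_within_factor dev_le.
have cnt_gt_tau a y : (tau < cnt_ay s a y)%N.
  rewrite -(ltr_nat R); apply: lt_le_trans (andP (cnt_close a y)).1.
  rewrite ltr_pdivlMr ?(lt_trans ltr01 k_gt1) //.
  by move: (n_large (a, y)); rewrite ltr_pdivrMr ?p_gt0.
have feas := feasible_of_cnt_ay_gt a0 cnt_gt_tau.
have [q [run ->]] := est_greedy (feas _).
exact: le_trans (uind_greedy_run_close n_gt0 cnt_close feas run) lnk_le.
Qed.

End Consistency.

Local Open Scope classical_set_scope.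

Theorem theorem3 (R : realType) (d : nat) (Ak : 'I_d -> finType) (Y : finType)
  (p : Aty Ak -> Y -> R) (tau : nat)
  (p_pos : forall a y, 0 < p a y)
  (p_sum : \sum_(a : Aty Ak) \sum_(y : Y) p a y = 1)
  (est : forall n : nat, n.-tuple (Sample Ak Y) -> R)
  (est_greedy : forall (n : nat) (s : n.-tuple (Sample Ak Y)),
      feasible s tau (singleton_part d) ->
      exists q, greedy_run R s tau (singleton_part d) q /\ est n s = uind R s q) :
  forall eps : R, 0 < eps ->
    (fun n : nat => Pr_iid p (fun s : n.-tuple (Sample Ak Y) => eps < `|est n s - ustar p|))
      @ \oo --> 0.
Proof.
move=> eps eps_gt0.
pose k := expR (eps / 4).
have k_gt1 : 1 < k by rewrite expR_gt1 divr_gt0.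
pose tol (x : Sample Ak Y) := p x.1 x.2 * (1 - k^-1).
have tol_gt0 x : 0 < tol x.
  by rewrite mulr_gt0 ?p_pos // subr_gt0 invf_lt1 // (lt_trans ltr01).
pose C := \sum_x (tol x ^+ 2)^-1.
apply: (squeeze_cvgr (f := cst 0) (h := fun n => C * n%:R^-1)); last 2 first.
- exact: cvg_cst.
- rewrite -(mulr0 C); apply: cvgMl_tmp.
  have n_gt0 : \forall n \near \oo, 0 < n%:R :> R.
    by near=> n; rewrite ltr0n; near: n; exact: nbhs_infty_gt.
  exact: (gtr0_cvgV0 n_gt0).2 cvgr_idn.
near=> n; apply/andP; split.
  by apply: sumr_ge0 => s _; apply: prodr_ge0 => i _; exact: ltW.
have -> : C * n%:R^-1 = \sum_x n%:R / (n%:R * tol x) ^+ 2.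
  rewrite /C mulr_suml; apply: eq_bigr => x _; field.
  by rewrite !gt_eqF ?ltr0n ?tol_gt0 //; near: n; exact: nbhs_infty_gt.
apply: (Pr_iid_estimate_far_le k_gt1 p_pos p_sum est_greedy).
- by near: n; exact: nbhs_infty_gt.
- by rewrite expRK mulrC divfK.
- by near: n; apply: filter_forall => x; exact: nbhs_infty_gtr.
Unshelve. all: by end_near.
Qed.
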